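(* Let $T \subseteq \mathbb{Z}_2^\omega$ be a thin set such that $T\cap X\neq\emptyset$ for every equivalence class $X$ of the relation $\sim$ on $\mathbb{Z}_2^\omega$. Then the game $\mathcal{G}(T)$ is undetermined, i.e. neither Ego nor Alter has a winning strategy in $\mathcal{G}(T)$.
   Context: $\mathbb{Z}_2^\omega$ is the set of infinite binary sequences indexed by $\omega=\{0,1,2,\dots\}$; $\mathbb{Z}_2^+=\bigcup_{n\ge1}\mathbb{Z}_2^n$ is the set of nonempty finite binary words. The Hamming distance is $\mathrm{hd}(x,y)=|\{k: x(k)\ne y(k)\}|\in\omega\cup\{\omega\}$, and $x\sim y$ iff $\mathrm{hd}(x,y)$ is finite. A set $T\subseteq\mathbb{Z}_2^\omega$ is thin if for every $n\in\omega$ the map $x\mapsto x|_{\omega\setminus\{n\}}$ is injective on $T$. For $F\subseteq \mathbb{Z}_2^\omega$, $\mathcal{G}(F)$ is the infinite two-player game of perfect information in which Ego and Alter alternately choose words in $\mathbb{Z}_2^+$, Ego moving first; the outcome is the concatenation of all moves, an element of $\mathbb{Z}_2^\omega$, and Ego wins iff the outcome lies in $F$. Strategies for Ego are functions $e:\bigcup_{n\ge0}(\mathbb{Z}_2^+)^n\to\mathbb{Z}_2^+$ of Alter's previous moves, strategies for Alter are functions $a:\bigcup_{n\ge1}(\mathbb{Z}_2^+)^n\to\mathbb{Z}_2^+$ of Ego's previous moves; a strategy is winning for a player if that player wins every play in which he follows it. *)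

From mathcomp Require Import all_boot.
From mathcomp Require Import boolp classical_sets cardinality.
Local Open Scope classical_set_scope.
Set Implicit Arguments. Unset Strict Implicit. Unset Printing Implicit Defensive.

Definition cantor := nat -> bool.

Definition word := {w : seq bool | 0 < size w}.

Definition hsim (x y : cantor) : Prop :=
  finite_set [set k : nat | x k <> y k].

Definition thin (T : cantor -> Prop) : Prop :=
  forall (n : nat) (x y : cantor), T x -> T y ->
    (forall k, k <> n -> x k = y k) -> x = y.

(* Ego: function of Alter's previous moves (any finite list,
   including the empty one). Alter: function of Ego's previous moves; the
   argument list is always nonempty in a play, so the value on [::] is
   irrelevant. *)
Definition ego_strategy := seq word -> word.
Definition alter_strategy := seq word -> word.

Fixpoint rounds (e : ego_strategy) (a : alter_strategy) (n : nat)
  : seq word * seq word * seq word :=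
  match n with
  | 0 => ([::], [::], [::])
  | n'.+1 =>
      let: (E, A, M) := rounds e a n' in
      let x := e A in
      let y := a (rcons E x) in
      (rcons E x, rcons A y, M ++ [:: x; y])
  end.

Definition prefix (e : ego_strategy) (a : alter_strategy) (n : nat) : seq bool :=
  flatten (map val (rounds e a n).2).

(* The outcome: concatenation of all moves. After k+1 rounds the prefix has
   length >= 2(k+1) > k, so its k-th bit is the k-th bit of the outcome. *)
Definition outcome (e : ego_strategy) (a : alter_strategy) : cantor :=
  fun k => nth false (prefix e a k.+1) k.

Definition ego_wins (F : cantor -> Prop) (e : ego_strategy) : Prop :=
  forall a : alter_strategy, F (outcome e a).

Definition alter_wins (F : cantor -> Prop) (a : alter_strategy) : Prop :=
  forall e : ego_strategy, ~ F (outcome e a).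

Definition undetermined (F : cantor -> Prop) : Prop :=
  ~ (exists e, ego_wins F e) /\ ~ (exists a, alter_wins F a).

From Pilot Require Import Defs.
From mathcomp Require Import all_boot.
From mathcomp Require Import boolp classical_sets cardinality.
From mathcomp Require Import zify.

Set Implicit Arguments.
Unset Strict Implicit.

(* Against a fixed strategy of the opponent, a player can conduct countably many
   plays at once, one for each finite set D of positions, all fed by a single
   master sequence x: when play D is resumed, its next move is the part of x
   it has not yet seen, with the bits at positions in D flipped, and the
   opponent's reply in play D is appended to x.  Play D then has outcome x
   flipped on D.  Against a strategy of Ego, Alter thus reaches both x and x
   flipped at the first position after Ego's opening move, which cannot both
   lie in the thin set T; against a strategy of Alter, Ego reaches every
   sequence ~ x, and one of them lies in T. *)

Definition flip (D : seq nat) (x : cantor) : cantor :=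
  fun k => (k \in D) (+) x k.

Fixpoint flip_seq (n : nat) (D : seq nat) (s : seq bool) : seq bool :=
  if s is b :: s' then ((n \in D) (+) b) :: flip_seq n.+1 D s' else [::].

Lemma size_flip_seq n D s : size (flip_seq n D s) = size s.
Proof. by elim: s n => //= b s IH n; rewrite IH. Qed.

Lemma flip_seq_cat n D s t :
  flip_seq n D (s ++ t) = flip_seq n D s ++ flip_seq (n + size s) D t.
Proof. by elim: s n => [|b s IH] n /=; rewrite ?addn0 // IH addSnnS. Qed.

Lemma flip_seq_id n D s :
  (forall i, i < size s -> n + i \notin D) -> flip_seq n D s = s.
Proof.
elim: s n => //= b s IH n D_out.
rewrite IH => [|i lt_i]; last by rewrite addSnnS D_out.
by have := D_out 0 isT; rewrite addn0 => /negbTE ->.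
Qed.

Lemma nth_flip_seq n D s i : i < size s ->
  nth false (flip_seq n D s) i = (n + i \in D) (+) nth false s i.
Proof.
elim: s n i => // b s IH n [|i] /= lt_i; first by rewrite addn0.
by rewrite IH // addSnnS.
Qed.

Definition prefix_of (u : seq bool) (x : cantor) : Prop :=
  forall k, k < size u -> nth false u k = x k.

Lemma nth_prefix (T : eqType) (x0 : T) (u v : seq T) k :
  prefix u v -> k < size u -> nth x0 u k = nth x0 v k.
Proof. by move=> /prefixP [w ->] lt_k; rewrite nth_cat lt_k. Qed.

Lemma prefix_of_prefix u v x : prefix u v -> prefix_of v x -> prefix_of u x.
Proof.
move=> uv vx k lt_k; rewrite (nth_prefix false uv) // vx //.
exact: leq_trans lt_k (size_prefix uv).
Qed.

Lemma prefix_of_flip D s x :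
  prefix_of s x -> prefix_of (flip_seq 0 D s) (flip D x).
Proof.
move=> sx k; rewrite size_flip_seq => lt_k.
by rewrite nth_flip_seq // sx.
Qed.

Definition prefix_chain (T : eqType) (f : nat -> seq T) : Prop :=
  forall n, prefix (f n) (f n.+1).

Lemma prefix_chain_mono (T : eqType) (f : nat -> seq T) :
  prefix_chain f -> {homo f : m n / m <= n >-> prefix m n}.
Proof.
move=> chain_f; apply: (@homo_leq _ f (fun u v => prefix u v)) => //.
- exact: prefix_refl.
- exact: prefix_trans.
Qed.

Lemma prefix_chain_limit (T : eqType) (x0 : T) (f : nat -> seq T) :
  prefix_chain f -> (forall j, exists K, j < size (f K)) ->
  exists g : nat -> T, forall K j, j < size (f K) -> nth x0 (f K) j = g j.
Proof.
move=> chain_f /choice [N lt_N].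
exists (fun j => nth x0 (f (N j)) j) => K j lt_j.
have [le_KN|le_NK] := leqP K (N j).
  exact: nth_prefix (prefix_chain_mono chain_f le_KN) lt_j.
by rewrite (nth_prefix _ (prefix_chain_mono chain_f (ltnW le_NK))).
Qed.

Definition word0 : word := exist _ [:: false] isT.

Fixpoint play_after (R : seq word -> word) (h M : seq word) : seq bool :=
  if M is x :: M' then
    val x ++ val (R (rcons h x)) ++ play_after R (rcons h x) M'
  else [::].

Definition play_against (R : seq word -> word) (M : seq word) : seq bool :=
  play_after R [::] M.

Lemma play_after_cat R h M N :
  play_after R h (M ++ N) = play_after R h M ++ play_after R (h ++ M) N.
Proof.
elim: M h => [|x M IH] h /=; first by rewrite cats0.
by rewrite IH -cat_rcons !catA.
Qed.

Lemma play_against_rcons R M x :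
  play_against R (rcons M x) = play_against R M ++ val x ++ val (R (rcons M x)).
Proof. by rewrite /play_against -cats1 play_after_cat /= cats0 cats1. Qed.

Lemma play_against_take R M n :
  prefix (play_against R (take n M)) (play_against R M).
Proof.
by rewrite -{2}(cat_take_drop n M) /play_against play_after_cat prefix_prefix.
Qed.

Lemma size_game_prefix e a n : n <= size (Defs.prefix e a n).
Proof.
rewrite /Defs.prefix; elim: n => //= n IH.
case: (rounds e a n) IH => [[E A] M] /= IH.
rewrite map_cat flatten_cat size_cat /= cats0 size_cat.
have /= e_A_pos := valP (e A).
have /= a_E_pos := valP (a (rcons E (e A))).
lia.
Qed.

Lemma outcome_eq e a x :
  (forall n, prefix_of (Defs.prefix e a n) x) -> outcome e a = x.
Proof.
by move=> ex; apply/funext => k; apply: ex; apply: size_game_prefix.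
Qed.

Lemma ego_rounds (mv : nat -> word) a n :
  let e := fun A : seq word => mv (size A) in
  [/\ (rounds e a n).1.1 = mkseq mv n, size (rounds e a n).1.2 = n &
      Defs.prefix e a n = play_against a (mkseq mv n)].
Proof.
rewrite /Defs.prefix; elim: n => //= n IH.
case: (rounds _ a n) IH => [[E A] M] /= [-> size_A IH].
rewrite size_rcons size_A mkseqS map_cat flatten_cat IH play_against_rcons /=.
by rewrite cats0.
Qed.

Lemma alter_rounds (mv : nat -> word) e n :
  let a := fun E : seq word => mv (size E).-1 in
  [/\ size (rounds e a n).1.1 = n, (rounds e a n).1.2 = mkseq mv n &
      Defs.prefix e a n ++ val (e (mkseq mv n))
        = val (e [::]) ++ play_against e (mkseq mv n)].
Proof.
rewrite /Defs.prefix; elim: n => [|n IH] /=; first by rewrite cats0.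
case: (rounds e _ n) IH => [[E A] M] /= [size_E -> IH].
rewrite size_rcons size_E mkseqS map_cat flatten_cat play_against_rcons.
by rewrite catA -IH /= cats0 -!catA.
Qed.

Definition board (k : nat) : seq nat := odflt [::] (unpickle (logn 2 k.+1)).

Lemma board_infinitely_often D N : exists2 k, N <= k & board k = D.
Proof.
exists (2 ^ pickle D * N.*2.+1).-1.
  have : N.*2.+1 <= 2 ^ pickle D * N.*2.+1 by rewrite leq_pmull // expn_gt0.
  lia.
rewrite /board prednK ?muln_gt0 ?expn_gt0 // mulnC.
by rewrite logn_Gauss ?coprime2n ?oddS ?odd_double // pfactorK // pickleK.
Qed.

Section MasterSequence.

(* [R] is the opponent's strategy, answering the player's moves so far, and
   [s0] is the part of the play preceding the player's first move. *)
Variables (R : seq word -> word) (s0 : seq bool).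

(* The padding makes the first move of play [D] reach past every position of
   [D], so that the opponent's replies are never flipped. *)
Fixpoint run (k : nat) : seq bool * (seq nat -> seq word) :=
  if k is k'.+1 then
    let: (s, M) := run k' in
    let D := board k' in
    let s' := s ++ nseq (\max_(d <- D) d).+1 false in
    let seen := size (s0 ++ play_against R (M D)) in
    let x := insubd word0 (drop seen (flip_seq 0 D s')) in
    let MD := rcons (M D) x in
    (s' ++ val (R MD), fun D' => if D' == D then MD else M D')
  else (s0, fun=> [::]).

Definition master (k : nat) : seq bool := (run k).1.
Definition moves (k : nat) : seq nat -> seq word := (run k).2.

Lemma master_step k : exists t, master k.+1 = master k ++ false :: t.
Proof.
by rewrite /master /=; case: (run k) => s M /=; rewrite -catA; eexists.
Qed.

Lemma moves_step k D :
  exists x,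
    moves k.+1 D = if D == board k then rcons (moves k D) x else moves k D.
Proof.
rewrite /moves /=; case: (run k) => s M /=.
by case: eqP => [->|_]; [eexists | exists word0].
Qed.

Lemma master_chain : prefix_chain master.
Proof. by move=> k; have [t ->] := master_step k; apply: prefix_prefix. Qed.

Lemma size_master k : k <= size (master k).
Proof.
by elim: k => // k IH; have [t ->] := master_step k; rewrite size_cat /=; lia.
Qed.

Lemma moves_chain D : prefix_chain (moves^~ D).
Proof.
move=> k; have [x ->] := moves_step k D.
by case: ifP => _; [apply: prefix_rcons | apply: prefix_refl].
Qed.

Lemma size_moves_step k D :
  size (moves k.+1 D) = size (moves k D) + (D == board k).
Proof.
have [x ->] := moves_step k D.
by case: eqP => _; rewrite ?size_rcons ?addn1 ?addn0.
Qed.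

Lemma moves_unbounded D j : exists K, j < size (moves K D).
Proof.
elim: j => [|j [K lt_j]].
  have [k _ Dk] := board_infinitely_often D 0.
  by exists k.+1; rewrite size_moves_step Dk eqxx addn1.
have [k le_Kk Dk] := board_infinitely_often D K.
exists k.+1; rewrite size_moves_step Dk eqxx addn1 ltnS.
exact: leq_trans lt_j (size_prefix (prefix_chain_mono (moves_chain D) le_Kk)).
Qed.

Lemma board_play_prefix k D : all (leq (size s0)) D ->
  prefix (s0 ++ play_against R (moves k D)) (flip_seq 0 D (master k)).
Proof.
move=> D_ge_s0; elim: k => [|k].
  rewrite /moves /master /= cats0 flip_seq_id ?prefix_refl // => i lt_i.
  by apply/negP => /(allP D_ge_s0); rewrite add0n; lia.
rewrite /moves /master /=; case: (run k) => s M /= IH.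
have flip_ext t : prefix (flip_seq 0 D s) (flip_seq 0 D (s ++ t)).
  by rewrite flip_seq_cat prefix_prefix.
case: eqP => [<- | _]; last first.
  by rewrite -catA; apply: prefix_trans IH (flip_ext _).
set pad := false :: _; set b := s0 ++ play_against R (M D) in IH *.
have b_prefix : prefix b (flip_seq 0 D (s ++ pad)).
  exact: prefix_trans IH (flip_ext _).
have size_b : size b < size (s ++ pad).
  rewrite size_cat /= addnS ltnS (leq_trans (size_prefix IH)) //.
  by rewrite size_flip_seq leq_addr.
have b_move :
    b ++ drop (size b) (flip_seq 0 D (s ++ pad)) = flip_seq 0 D (s ++ pad).
  by move: b_prefix; rewrite prefixE => /eqP {1}<-; rewrite cat_take_drop.
rewrite play_against_rcons insubdK; last first.
  by rewrite unfold_in /= size_drop size_flip_seq subn_gt0.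
(* After the move and the reply, play [D] is the flipped master sequence. *)
rewrite !catA -/b b_move [flip_seq 0 D (_ ++ \val _)]flip_seq_cat.
rewrite [flip_seq (0 + _) _ _]flip_seq_id ?prefix_refl //.
move=> i _; apply/negP => /(leq_bigmax_seq (P := xpredT) (F := id)) /(_ isT).
by rewrite size_cat /= size_nseq; lia.
Qed.

Lemma flipped_plays : exists x : cantor, forall D, all (leq (size s0)) D ->
  exists mv : nat -> word,
    forall n, prefix_of (s0 ++ play_against R (mkseq mv n)) (flip D x).
Proof.
have [x master_x] := prefix_chain_limit false master_chain
  (fun j => ex_intro _ j.+1 (size_master j.+1)).
exists x => D D_ge_s0.
have [mv moves_mv] :=
  prefix_chain_limit word0 (moves_chain D) (moves_unbounded D).
exists mv => n; have [K lt_n] := moves_unbounded D n.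
have mv_take : mkseq mv n = take n (moves K D).
  apply: (@eq_from_nth _ word0); first by rewrite size_mkseq size_takel // ltnW.
  move=> i; rewrite size_mkseq => lt_i.
  by rewrite nth_mkseq // nth_take // moves_mv // (ltn_trans lt_i lt_n).
apply: prefix_of_prefix (prefix_trans _ (board_play_prefix K D_ge_s0)) _.
  by rewrite mv_take prefix_catr // eqxx play_against_take.
exact/prefix_of_flip/master_x.
Qed.

End MasterSequence.

Lemma alter_flips (e : ego_strategy) : exists x : cantor, forall D,
  all (leq (size (val (e [::])))) D ->
  exists a : alter_strategy, outcome e a = flip D x.
Proof.
have [x flip_x] := flipped_plays e (val (e [::])).
exists x => D /flip_x [mv play_mv]; exists (fun E => mv (size E).-1).
apply: outcome_eq => n; apply: prefix_of_prefix (play_mv n).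
by have [_ _ <-] := alter_rounds mv e n; apply: prefix_prefix.
Qed.

Lemma ego_flips (a : alter_strategy) : exists x : cantor, forall D,
  exists e : ego_strategy, outcome e a = flip D x.
Proof.
have [x flip_x] := flipped_plays a [::].
exists x => D; have [|mv play_mv] := flip_x D; first exact/allP.
exists (fun A => mv (size A)); apply: outcome_eq => n.
by have [_ _ ->] := ego_rounds mv a n; apply: play_mv.
Qed.

Lemma hsim_flip t x : hsim t x -> exists D, t = flip D x.
Proof.
case/finite_seqP => D tx; exists D; apply/funext => k.
have /= tkD := congr1 (fun S => S k) tx.
have kD : (k \in D) = (t k != x k).
  by apply/idP/idP => [|/eqP]; rewrite -tkD // => ?; apply/eqP.
by rewrite /flip kD; case: (t k); case: (x k).
Qed.

Lemma thin_no_ego_win (T : cantor -> Prop) : thin T -> ~ exists e, ego_wins T e.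
Proof.
move=> thin_T [e e_wins]; set n := size (val (e [::])).
have [x flip_x] := alter_flips e.
have [a0 a0_x] := flip_x [::] isT.
have [|a1 a1_x] := flip_x [:: n]; first by rewrite /= leqnn.
have agree k : k <> n -> flip [::] x k = flip [:: n] x k.
  by rewrite /flip !inE => /eqP/negbTE ->.
have := thin_T n _ _ (e_wins a0) (e_wins a1).
rewrite a0_x a1_x => /(_ agree) /(congr1 (fun y => y n)).
by rewrite /flip !inE eqxx; case: (x n).
Qed.

Lemma dense_no_alter_win (T : cantor -> Prop) :
  (forall x, exists t, T t /\ hsim t x) -> ~ exists a, alter_wins T a.
Proof.
move=> dense_T [a a_wins]; have [x flip_x] := ego_flips a.
have [t [Tt /hsim_flip [D t_x]]] := dense_T x.
have [e e_x] := flip_x D.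
by apply: (a_wins e); rewrite e_x -t_x.
Qed.

Theorem proposition8 (T : cantor -> Prop) :
  thin T ->
  (forall x : cantor, exists t, T t /\ hsim t x) ->
  undetermined T.
Proof.
move=> thin_T dense_T; split.
- exact: thin_no_ego_win.
- exact: dense_no_alter_win.
Qed.
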